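(* Let $P$ be a finite semipure poset of length $n$, $t\ge1$, $\lambda_P:\mathrm{Cov}(\hat P)\to L_P$ an EL-labeling, $\lambda$ the induced EL-labeling of $\widehat{P*T_{t,n}}$, and $m\in\mathbb N$. Then the number of ascent free maximal chains of $\widehat{P*T_{t,n}}$ of length $m+2$ under $\lambda$ equals $$\sum_{\substack{w\in\mathrm{NDA}_{m+2}(L_P)\\ w_1\not\le w_2,\ w_{m+1}\not\le w_{m+2}}} c(w)\,t^{\mathrm{asc}(w)}(1+t)^{m-2\,\mathrm{asc}(w)}+\sum_{\substack{w\in\mathrm{NDA}_{m+2}(L_P)\\ w_1\not\le w_2,\ w_{m+1}\le w_{m+2}}} c(w)\,t^{\mathrm{asc}(w)}(1+t)^{m+1-2\,\mathrm{asc}(w)},$$ where $c(w)$ is the number of maximal chains of $\hat P$ of length $m+2$ whose label sequence under $\lambda_P$ is $w$.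
   Context: Rees product $P*Q$ of semipure posets (rank $r_P(x)$ = common length of maximal chains of $P_{\le x}$): the set $\{(p,q): r_P(p)\ge r_Q(q)\}$ with $(p_1,q_1)\le(p_2,q_2)$ iff $p_1\le p_2$, $q_1\le q_2$, $r_P(p_2)-r_P(p_1)\ge r_Q(q_2)-r_Q(q_1)$. $T_{t,n}$: sequences over $\{1,\dots,t\}$ of length $\le n$ ordered by prefix, minimum $\hat 0_T$, rank = length. $\hat Q$: $Q$ with new minimum and maximum adjoined; for $\hat P$ these are $\hat 0_P,\hat 1_P$. An edge labeling $\lambda:\mathrm{Cov}(Q)\to L$ ($L$ a poset) of a bounded poset is an EL-labeling if each interval $[x,y]$ has a unique maximal chain with weakly increasing labels and its label sequence lexicographically precedes those of all other maximal chains of $[x,y]$. The induced labeling $\lambda$ of $\widehat{P*T_{t,n}}$ takes values in $L_P\times\{0<1\}$ (product order): the minimum is identified with $(\hat 0_P,\hat 0_T)$; for a cover $(x,k)\lessdot(y,l)$ with $(y,l)\ne\hat 1$, $\lambda=(\lambda_P(x,y),1)$ if $k<l$ and $(\lambda_P(x,y),0)$ if $k=l$; for $(x,k)\lessdot\hat 1$, $\lambda=(\lambda_P(x,\hat 1_P),0)$. A maximal chain is ascent free if no two consecutive labels $a,b$ satisfy $a\le b$. For a word $w$ of length $N$ over a poset $A$: $i\in[N-1]$ is an ascent if $w_i\le w_{i+1}$; $\mathrm{asc}(w)$ counts ascents; a double ascent is $i\in[N-2]$ with $w_i\le w_{i+1}\le w_{i+2}$; $\mathrm{NDA}_N(A)$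 is the set of length-$N$ words over $A$ without double ascents. *)

From mathcomp Require Import all_boot all_order.
Set Implicit Arguments. Unset Strict Implicit. Unset Printing Implicit Defensive.
Import Order.TTheory.
Local Open Scope order_scope.

Section Gen.
Variables (X : finType) (le : rel X).

Definition ltr (x y : X) := (x != y) && le x y.
Definition covr (x y : X) := ltr x y && [forall z, ~~ (ltr x z && ltr z y)].

Definition is_chain (x y : X) (c : seq X) :=
  if c is z :: s then [&& z == x, path covr z s & last z s == y] else false.

Definition labels {A : Type} (lam : X -> X -> A) (c : seq X) : seq A :=
  if c is z :: s then pairmap lam z s else [::].
End Gen.

Definition lex_lt {dL} {L : porderType dL} (w w' : seq L) : Prop :=
  (exists u a b v v', w = u ++ a :: v /\ w' = u ++ b :: v' /\ a < b)
  \/ (exists u, u <> [::] /\ w' = w ++ u).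

Definition EL_labeling (X : finType) (le : rel X) {dL} {L : porderType dL}
  (lam : X -> X -> L) : Prop :=
  forall x y, le x y ->
    exists c, [/\ is_chain le x y c, sorted <=%O (labels lam c),
      (forall c', is_chain le x y c' -> sorted <=%O (labels lam c') -> c' = c) &
      (forall c', is_chain le x y c' -> c' <> c -> lex_lt (labels lam c) (labels lam c'))].

Definition hatT (X : finType) : finType := (X + bool)%type.
Definition hbot {X : finType} : hatT X := inr false.
Definition htop {X : finType} : hatT X := inr true.
Definition hat_le {X : finType} (le : rel X) : rel (hatT X) :=
  fun a b => match a, b with
  | inr false, _ => true
  | _, inr true => true
  | inl x, inl y => le x y
  | _, _ => false
  end.

Definition nchains (X : finType) (le : rel X) (bot top : X) {A : Type}
  (lam : X -> X -> A) (k : nat) (Q : seq A -> bool) : nat :=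
  #|[pred c : k.+1.-tuple X | is_chain le bot top c && Q (labels lam c)]|.

Section Rank.
Context {d : Order.disp_t} (P : finPOrderType d).

Definition minimalP (x : P) := [forall y : P, (y <= x) ==> (y == x)].
Definition chain_toP (c : seq P) (x : P) :=
  if c is z :: s then [&& minimalP z, path (covr <=%O) z s & last z s == x]
  else false.
Definition semipure : Prop :=
  forall x c c', chain_toP c x -> chain_toP c' x -> size c = size c'.
Definition rankP (x : P) : nat :=
  \max_(k < #|P|.+1 | [exists c : k.+1.-tuple P, chain_toP c x]) (k : nat).
Definition poset_length (n : nat) : Prop :=
  (exists x, rankP x = n) /\ (forall x, rankP x <= n)%N.
End Rank.

(* ---------- T_{t,n}: words over {1..t} (here 'I_t) of length <= n ---------- *)
Definition Tt (t n : nat) : finType := {k : 'I_n.+1 & k.-tuple 'I_t}.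
Definition tseq {t n} (q : Tt t n) : seq 'I_t := tagged q.

Section Rees.
Context {d : Order.disp_t} (P : finPOrderType d) (t n : nat).

Definition rees_ok (pq : P * Tt t n) : bool := (size (tseq pq.2) <= rankP pq.1)%N.
Definition Rees : finType := {pq : P * Tt t n | rees_ok pq}.
(* (p1,q1) <= (p2,q2) iff p1 <= p2, q1 <= q2, r(p2)-r(p1) >= r(q2)-r(q1) *)
Definition rees_le (a b : Rees) : bool :=
  let: (p1, q1) := val a in let: (p2, q2) := val b in
  [&& p1 <= p2, prefix (tseq q1) (tseq q2)
    & (rankP p1 + size (tseq q2) <= rankP p2 + size (tseq q1))%N].

Definition proj_P (y : hatT Rees) : hatT P :=
  match y with inl a => inl (val a).1 | inr b => inr b end.
Definition proj_T (y : hatT Rees) : seq 'I_t :=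
  match y with inl a => tseq (val a).2 | inr _ => [::] end.

Definition induced_lab {dL} {L : porderType dL} (lamP : hatT P -> hatT P -> L)
  (x y : hatT Rees) : L * bool :=
  match y with
  | inr true => (lamP (proj_P x) htop, false)
  | _ => (lamP (proj_P x) (proj_P y),
          (proj_T x != proj_T y) && prefix (proj_T x) (proj_T y))
  end.
End Rees.

Definition prod_le {dL} {L : porderType dL} (a b : L * bool) : bool :=
  (a.1 <= b.1) && (a.2 ==> b.2).

Definition ascs {A : Type} (r : A -> A -> bool) (w : seq A) : seq bool :=
  [seq r ab.1 ab.2 | ab <- zip w (behead w)].
Definition asc {A : Type} (r : A -> A -> bool) (w : seq A) : nat := count id (ascs r w).
Definition ascent_free {A : Type} (r : A -> A -> bool) (w : seq A) : bool :=
  ~~ has id (ascs r w).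
Definition NDA {A : Type} (r : A -> A -> bool) (N : nat) (w : seq A) : bool :=
  (size w == N) &&
  ~~ has (fun bb : bool * bool => bb.1 && bb.2) (zip (ascs r w) (behead (ascs r w))).

From mathcomp Require Import all_boot all_order zify.
Set Implicit Arguments. Unset Strict Implicit. Unset Printing Implicit Defensive.
Import Order.TTheory.

(* The proof is a bijective count:
   1. Rank theory of semipure posets, and the covers, minimal and maximal
      elements of the Rees product P * T_{t,n} (rees_covr, rees_minimal,
      rees_maximal).
   2. Covers of hat(P * T) in terms of the projections to hat P and to words
      (covr_hatR).  Hence a maximal chain D of hat(P * T) of length m + 2 is
      the same as its projection C, a maximal chain of hat P, together with
      choices s : 'I_m -> option 'I_t saying at which inner steps the word
      grows and by which letter (lift, growth); the induced label word of D
      is zip (labels C) (grow_bits s) (labels_lift).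
   3. For a word w of length m + 2, the number of s making zip w (grow_bits s)
      ascent free is 0 if w has a double ascent or an ascent at 0, and
      t^asc(w) (1+t)^(m + [ascent at m] - 2 asc(w)) otherwise
      (card_ascent_free_lifts).
   4. Summing over the chains C of hat P, grouped by label word
      (sum_label_words), gives the two sums of the theorem. *)

Section HatCovers.
Variables (X : finType) (le : rel X).

Lemma covr_hat_inl x y : covr (hat_le le) (inl x) (inl y) = covr le x y.
Proof.
rewrite /covr /ltr /=; congr andb; apply/forallP/forallP => H z.
  by have := H (inl z).
by case: z => [z|[]] //=; have := H z.
Qed.

Lemma covr_hat_bot_inl x : covr (hat_le le) hbot (inl x) = [forall y, ~~ ltr le y x].
Proof.
rewrite /covr /ltr /=; apply/forallP/forallP => H z.
  by have := H (inl z).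
by case: z => [z|[]] //=; have := H z.
Qed.

Lemma covr_hat_inl_top x : covr (hat_le le) (inl x) htop = [forall y, ~~ ltr le x y].
Proof.
rewrite /covr /ltr /=; apply/forallP/forallP => H z.
  by have := H (inl z); rewrite andbT.
by case: z => [z|[]] //=; rewrite andbT; have := H z.
Qed.

Lemma covr_hat_top z : covr (hat_le le) htop z = false.
Proof. by rewrite /covr /ltr; case: z => [z|[]]. Qed.

Lemma covr_hat_bot z : covr (hat_le le) z hbot = false.
Proof. by rewrite /covr /ltr; case: z => [z|[]]. Qed.

Lemma covr_hat_bot_top (x : X) : covr (hat_le le) hbot htop = false.
Proof. by rewrite /covr /ltr /=; apply/negP => /forallP/(_ (inl x)). Qed.

End HatCovers.

Section Rank.
Context {d : Order.disp_t} (P : finPOrderType d).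
Local Open Scope order_scope.

Lemma ltrE (x y : P) : ltr <=%O x y = (x < y).
Proof. by rewrite /ltr lt_neqAle eq_sym. Qed.

Lemma covrE (x y : P) :
  covr <=%O x y = (x < y) && [forall z, ~~ ((x < z) && (z < y))].
Proof.
rewrite /covr ltrE; congr andb.
by apply/forallP/forallP => H z; have := H z; rewrite !ltrE.
Qed.

Lemma covr_lt (x y : P) : covr <=%O x y -> x < y.
Proof. by rewrite covrE => /andP[]. Qed.

Lemma minimalPE (x : P) : minimalP x = [forall y, ~~ (y < x)].
Proof.
apply/forallP/forallP => H y; have := H y; rewrite lt_neqAle.
  by case: (y <= x); rewrite ?andbT ?andbF //= => /eqP->; rewrite eqxx.
by case: (y <= x); rewrite ?andbT //= negbK.
Qed.

(* The strict down-set strictly shrinks along <, so < is well-founded. *)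
Definition down (x : P) : nat := #|[pred w | w < x]|.

Lemma card_down_lt (x y : P) : x < y -> (down x < down y)%N.
Proof.
move=> xy; apply: proper_card; apply/properP; split.
  by apply/subsetP => u; rewrite !inE => ux; apply: lt_trans ux xy.
by exists x; rewrite !inE ?ltxx.
Qed.

Lemma lt_ind (Q : P -> Prop) :
  (forall x, (forall y, y < x -> Q y) -> Q x) -> forall x, Q x.
Proof.
move=> IH x; move: {2}(down x) (leqnn (down x)) => k.
elim: k x => [|k IHk] x Hk; apply: IH => y yx.
  by have := leq_trans (card_down_lt yx) Hk; rewrite ltn0.
by apply: IHk; rewrite -ltnS; apply: leq_trans (card_down_lt yx) Hk.
Qed.

Lemma cover_between (x y : P) : x < y -> exists2 z, x <= z & covr <=%O z y.
Proof.
move=> xy; have Sx : (x <= x) && (x < y) by rewrite lexx.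
case: (@arg_maxnP _ x (fun z : P => (x <= z) && (z < y))
        down Sx) => z /andP[xz zy] Hmax.
exists z => //; rewrite covrE zy; apply/forallP => w; apply/negP => /andP[zw wy].
have := Hmax w; rewrite (le_trans xz (ltW zw)) wy => /(_ isT).
by apply/negP; rewrite -ltnNge card_down_lt.
Qed.

Lemma chain_exists (x : P) : exists c, chain_toP c x.
Proof.
elim/lt_ind: x => x IH.
case: (boolP (minimalP x)) => mx; first by exists [:: x]; rewrite /= mx eqxx.
move: mx; rewrite minimalPE => /forallPn[y]; rewrite negbK => /cover_between[z _ zx].
have [[|a s] //= /and3P[ma ps /eqP ls]] := IH z (covr_lt zx).
by exists (a :: rcons s x); rewrite /= ma rcons_path ps ls zx last_rcons eqxx.
Qed.

(* A chain is strictly increasing, hence has at most #|P| elements. *)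
Lemma chain_size c (x : P) : chain_toP c x -> (size c <= #|P|)%N.
Proof.
case: c => // z s /and3P[_ Hp _].
have U : uniq (z :: s).
  by apply: lt_sorted_uniq; apply: sub_path Hp => a b /covr_lt.
by rewrite -(card_uniqP U) max_card.
Qed.

Hypothesis SP : semipure P.

Lemma rank_chain c (x : P) : chain_toP c x -> size c = (rankP x).+1.
Proof.
move=> Hc; have c0 : (0 < size c)%N by case: c Hc.
have Hk : ((size c).-1 < #|P|.+1)%N.
  by rewrite ltnS; apply: leq_trans (leq_pred _) (chain_size Hc).
rewrite /rankP (@big_pred1 _ _ _ _ (Ordinal Hk)) /= ?prednK // => k /=.
apply/existsP/eqP => [[c' Hc']|->]; first by apply: val_inj; rewrite /= (SP Hc Hc') size_tuple.
have E : size c = (Ordinal Hk).+1 by rewrite /= prednK.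
by exists (tcast E (in_tuple c)); rewrite val_tcast.
Qed.

Lemma rank_min (x : P) : minimalP x -> rankP x = 0%N.
Proof.
by move=> mx; have /rank_chain[] : chain_toP [:: x] x by rewrite /= mx eqxx.
Qed.

Lemma rank_cov (x y : P) : covr <=%O x y -> rankP y = (rankP x).+1.
Proof.
move=> xy; have [[|a s] // Hc] := chain_exists x.
have := rank_chain Hc; case/and3P: Hc => ma ps /eqP ls Hr.
have /rank_chain : chain_toP (a :: rcons s y) y.
  by rewrite /= ma rcons_path ps ls xy last_rcons eqxx.
by rewrite /= size_rcons; move: Hr => /= -> -[].
Qed.

Lemma rank_lt (x y : P) : x < y -> (rankP x < rankP y)%N.
Proof.
elim/lt_ind: y => y IH xy; have [z xz zy] := cover_between xy.
rewrite (rank_cov zy) ltnS; case: (eqVneq x z) => [->//|nxz].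
by apply/ltnW/IH; [exact: covr_lt | rewrite lt_neqAle nxz].
Qed.

End Rank.

Lemma prefix_size_eq (T : eqType) (s1 s2 : seq T) :
  prefix s1 s2 -> (size s2 <= size s1)%N -> s1 = s2.
Proof. by rewrite prefixE => /eqP E Hs; rewrite -E take_oversize. Qed.

Lemma ohead_pmap (T : Type) (s : seq T) : (size s <= 1)%N -> pmap id [:: ohead s] = s.
Proof. by case: s => [|a [|]]. Qed.

Section Rees.
Context {d : Order.disp_t} (P : finPOrderType d) (t n : nat).
Local Open Scope order_scope.
Hypothesis SP : semipure P.
Hypothesis Hn : forall x : P, (rankP x <= n)%N.

Notation ltR := (ltr (@rees_le _ P t n)).

Lemma tseq_inj : injective (@tseq t n).
Proof.
case=> k1 s1 [k2 s2]; rewrite /tseq /= => E.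
have kk : k1 = k2 by apply: val_inj; rewrite /= -(size_tuple s1) -(size_tuple s2) E.
by subst k2; have -> : s1 = s2 by apply: val_inj.
Qed.

(* The element of T_{t,n} with word q (any element if |q| > n). *)
Definition toT (q : seq 'I_t) : Tt t n :=
  odflt (existT _ ord0 [tuple]) [pick T : Tt t n | tseq T == q].

Lemma tseq_toT q : (size q <= n)%N -> tseq (toT q) = q.
Proof.
rewrite -ltnS => H; rewrite /toT; case: pickP => [T /eqP //|].
by move/(_ (existT _ (Ordinal H) (in_tuple q))); rewrite /tseq /= eqxx.
Qed.

Definition rp (a : Rees P t n) : P := (val a).1.
Definition rq (a : Rees P t n) : seq 'I_t := tseq (val a).2.

Lemma rq_rank (a : Rees P t n) : (size (rq a) <= rankP (rp a))%N.
Proof. exact: (valP a). Qed.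

Lemma rees_leE (a b : Rees P t n) : rees_le a b =
  [&& rp a <= rp b, prefix (rq a) (rq b)
    & (rankP (rp a) + size (rq b) <= rankP (rp b) + size (rq a))%N].
Proof. by case: a => [[? ?] ?]; case: b => [[? ?] ?]. Qed.

Lemma rees_eq (a b : Rees P t n) : rp a = rp b -> rq a = rq b -> a = b.
Proof.
case: a => [[? ?] ?]; case: b => [[? ?] ?]; rewrite /rp /rq /= => E1 E.
by apply: val_inj; rewrite /= E1 (tseq_inj E).
Qed.

Lemma rees_ok_nil (x : P) : rees_ok (x, toT [::]).
Proof. by rewrite /rees_ok /= tseq_toT. Qed.

(* mkR x q is the element (x, q) of P * T_{t,n}, provided |q| <= rankP x. *)
Definition mkR (x : P) (q : seq 'I_t) : Rees P t n :=
  insubd (exist _ (x, toT [::]) (rees_ok_nil x)) (x, toT q).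

Lemma mkR_p x q : rp (mkR x q) = x.
Proof. by rewrite /rp /mkR /insubd; case: insubP => [u _ ->|]. Qed.

Lemma mkR_q x q : (size q <= rankP x)%N -> rq (mkR x q) = q.
Proof.
move=> H; have Hq : (size q <= n)%N by apply: leq_trans H (Hn x).
have ok : (x, toT q) \in rees_ok (t:=t) (n:=n) by rewrite unfold_in /rees_ok /= tseq_toT.
by rewrite /rq /mkR (insubdK _ ok) /= tseq_toT.
Qed.

Lemma mkR_val (a : Rees P t n) : mkR (rp a) (rq a) = a.
Proof. by apply: rees_eq; rewrite ?mkR_p ?mkR_q // rq_rank. Qed.

Lemma rees_le_eqp (a b : Rees P t n) : rees_le a b -> rp a = rp b -> a = b.
Proof.
rewrite rees_leE => /and3P[_ pre rk] E; apply: rees_eq => //.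
by apply: prefix_size_eq pre _; rewrite E leq_add2l in rk.
Qed.

Lemma rees_lt_p (a b : Rees P t n) : ltR a b -> rp a < rp b.
Proof.
case/andP => nab ab; have := ab; rewrite rees_leE => /and3P[pab _ _].
rewrite lt_neqAle pab andbT; apply: contra nab => /eqP E.
by rewrite (rees_le_eqp ab E).
Qed.

Lemma rees_below (a : Rees P t n) z : z < rp a -> exists2 c, rp c = z & ltR c a.
Proof.
move=> za; have rz := rank_lt SP za; have ra := rq_rank a.
pose c := mkR z (take (size (rq a) - (rankP (rp a) - rankP z)) (rq a)).
have Hq : rq c = take (size (rq a) - (rankP (rp a) - rankP z)) (rq a).
  by rewrite mkR_q // size_take_min; lia.
exists c; first exact: mkR_p.
rewrite /ltr rees_leE mkR_p Hq (ltW za) prefix_take size_take_min /= andbC.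
apply/andP; split; first lia.
by apply/eqP => E; move: za; rewrite -E mkR_p ltxx.
Qed.

Lemma rees_above (a : Rees P t n) y : rp a < y -> exists2 c, rp c = y & ltR a c.
Proof.
move=> ay; have ry := rank_lt SP ay; have ra := rq_rank a.
exists (mkR y (rq a)); first exact: mkR_p.
rewrite /ltr rees_leE mkR_p mkR_q; last lia.
rewrite (ltW ay) prefix_refl andbC /=; apply/andP; split; first lia.
by apply/eqP => E; move: ay; rewrite {1}E mkR_p ltxx.
Qed.

Lemma rees_between (a b : Rees P t n) z : rees_le a b -> rp a < z -> z < rp b ->
  exists2 c, ltR a c & ltR c b.
Proof.
move=> ab az zb; have ra := rq_rank a; have rb := rq_rank b.
have raz := rank_lt SP az; have rzb := rank_lt SP zb.
move: ab; rewrite rees_leE => /and3P[_ pre rk].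
pose k := (size (rq a) + (rankP z - rankP (rp a)))%N.
have Hq : rq (mkR z (take k (rq b))) = take k (rq b).
  by rewrite mkR_q // size_take_min /k; lia.
have Hk : prefix (rq a) (take k (rq b)).
  by move: pre; rewrite !prefixE take_takel ?leq_addr.
exists (mkR z (take k (rq b))); rewrite /ltr !rees_leE mkR_p Hq.
  rewrite (ltW az) Hk size_take_min /= andbC; apply/andP; split; first by rewrite /k; lia.
  by apply/eqP => E; move: az; rewrite {1}E mkR_p ltxx.
rewrite (ltW zb) prefix_take size_take_min /= andbC; apply/andP; split; first by rewrite /k; lia.
by apply/eqP => E; move: zb; rewrite -{1}E mkR_p ltxx.
Qed.

Lemma rees_minimal (a : Rees P t n) :
  [forall b, ~~ ltR b a] = minimalP (rp a) && (rq a == [::]).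
Proof.
apply/forallP/andP => [H|[mp /eqP q0] b].
  have mp : minimalP (rp a).
    rewrite minimalPE; apply/forallP => z; apply/negP => /rees_below[c _].
    by apply/negP; apply: H.
  by split => //; have := rq_rank a; rewrite (rank_min SP mp) leqn0 size_eq0.
apply/negP => /rees_lt_p ba; move: mp; rewrite minimalPE.
by move/forallP/(_ (rp b)); rewrite ba.
Qed.

Lemma rees_maximal (a : Rees P t n) :
  [forall b, ~~ ltR a b] = [forall y, ~~ ltr <=%O (rp a) y].
Proof.
apply/forallP/forallP => H y.
  by rewrite ltrE; apply/negP => /rees_above[c _]; apply/negP; apply: H.
by apply/negP => /rees_lt_p ay; have := H (rp y); rewrite ltrE ay.
Qed.

Lemma rees_covr (a b : Rees P t n) :
  covr (@rees_le _ P t n) a b =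
  [&& covr <=%O (rp a) (rp b), prefix (rq a) (rq b) & (size (rq b) <= (size (rq a)).+1)%N].
Proof.
apply/idP/idP.
  case/andP => ltab /forallP Hnb; have pab := rees_lt_p ltab.
  have cab : covr <=%O (rp a) (rp b).
    rewrite covrE pab /=; apply/forallP => z; apply/negP => /andP[az zb].
    have [c ac cb] := rees_between (andP ltab).2 az zb.
    by have := Hnb c; rewrite ac cb.
  move: (andP ltab).2; rewrite rees_leE (rank_cov SP cab) => /and3P[_ pre rk].
  by rewrite cab pre /=; lia.
case/and3P => cab pre sz; have pab := covr_lt cab.
rewrite /covr /ltr rees_leE (ltW pab) pre (rank_cov SP cab) /=.
apply/andP; split.
  apply/andP; split; last lia.
  by apply: contraTneq pab => ->; rewrite (ltxx (rp b)).
apply/forallP => c; apply/negP => /andP[/rees_lt_p ac /rees_lt_p cb].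
by move: cab; rewrite covrE => /andP[_ /forallP/(_ (rp c))]; rewrite ac cb.
Qed.

End Rees.

Section ChainEntries.
Variables (X : finType) (le : rel X).

Lemma is_chain_nth (x y : X) (c : seq X) k : size c = k.+1 ->
  is_chain le x y c <->
  [/\ nth x c 0 = x, (forall j, j < k -> covr le (nth x c j) (nth x c j.+1))
    & nth x c k = y].
Proof.
case: c => // z s [Hs]; rewrite /is_chain /=; split.
  case/and3P => /eqP -> /(pathP x) H /eqP <-; split => //.
    by move=> j; rewrite -Hs => /H.
  by rewrite (last_nth x) Hs.
case=> -> H E; rewrite eqxx /=; apply/andP; split.
  by apply/(pathP x) => j; rewrite Hs => /H.
by rewrite (last_nth x) Hs E.
Qed.

Lemma size_labels {A : Type} (lam : X -> X -> A) c : size (labels lam c) = (size c).-1.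
Proof. by case: c => //= z s; rewrite size_pairmap. Qed.

Lemma nth_labels {A : Type} (lam : X -> X -> A) (a0 : A) (x0 : X) c j :
  j < (size c).-1 -> nth a0 (labels lam c) j = lam (nth x0 c j) (nth x0 c j.+1).
Proof. by case: c => //= z s Hj; rewrite (nth_pairmap x0). Qed.

End ChainEntries.

Section HatReesCovers.
Context {d : Order.disp_t} (P : finPOrderType d) (t n : nat).
Hypothesis SP : semipure P.
Hypothesis Hn : forall x : P, (rankP x <= n)%N.
Variable x0 : P.

Notation leP := (hat_le (<=%O : rel P)).
Notation leR := (hat_le (@rees_le _ P t n)).
Notation prj := (@proj_P _ P t n).
Notation prq := (@proj_T _ P t n).

Lemma covr_hatR u v : v != htop ->
  covr leR u v = [&& covr leP (prj u) (prj v), prefix (prq u) (prq v)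
                   & size (prq v) <= (size (prq u)).+1].
Proof.
case: v => [b|[]] Hv; last 2 first.
- by rewrite eqxx in Hv.
- by rewrite !covr_hat_bot.
case: u => [a|[]].
- by rewrite !covr_hat_inl rees_covr.
- by rewrite !covr_hat_top.
- rewrite covr_hat_bot_inl rees_minimal // [covr leP _ _]covr_hat_bot_inl /= prefix0s.
  have -> : [forall y, ~~ ltr <=%O y (rp b)] = minimalP (rp b).
    by rewrite minimalPE; apply: eq_forallb => y; rewrite ltrE.
  case: (boolP (minimalP (rp b))) => //= mb.
  have := rq_rank b; rewrite (rank_min SP mb) leqn0 => /eqP sb.
  by rewrite -size_eq0 -/(rq b) sb.
Qed.

Lemma covr_hatR_top u : covr leR u htop = covr leP (prj u) htop.
Proof.
case: u => [a|[]].
- by rewrite !covr_hat_inl_top rees_maximal.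
- by rewrite !covr_hat_top.
- by rewrite (covr_hat_bot_top _ (@mkR _ P t n x0 [::])) (covr_hat_bot_top _ x0).
Qed.

End HatReesCovers.

Section Choices.
Variables (t m : nat).
Notation choices := {ffun 'I_m -> option 'I_t}.

(* A choice vector s describes a word growing along a chain with m + 2 steps:
   at step k + 1 (k < m) it is extended by the letter a if s k = Some a and
   unchanged if s k = None; it never grows at the first and last steps.
   grown s j is the word at entry j, grow_bits s the list of m + 2 bits
   telling at which steps the word grows. *)
Definition grown (s : choices) (j : nat) : seq 'I_t := pmap id (take j.-1 (fgraph s)).

Definition grow_bits (s : choices) : seq bool := false :: rcons (map isSome (fgraph s)) false.

Lemma size_fgraph (s : choices) : size (fgraph s) = m.
Proof. by rewrite size_tuple card_ord. Qed.

Lemma grown_nil s j : j <= 1 -> grown s j = [::].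
Proof. by case: j => [|[|]] // _; rewrite /grown take0. Qed.

Lemma size_grown s j : size (grown s j) <= j.-1.
Proof.
rewrite /grown size_pmap; apply: leq_trans (count_size _ _) _.
by rewrite size_take_min geq_minl.
Qed.

Lemma grownS s j : 0 < j ->
  grown s j.+1 = grown s j ++ pmap id [:: nth None (fgraph s) j.-1].
Proof.
case: j => // j _; rewrite /grown /=.
case: (ltnP j (size (fgraph s))) => Hj.
  by rewrite (take_nth None Hj) -cats1 pmap_cat.
by rewrite !take_oversize ?nth_default ?cats0 // ltnW.
Qed.

Lemma grown_step s j :
  prefix (grown s j) (grown s j.+1) && (size (grown s j.+1) <= (size (grown s j)).+1).
Proof.
case: j => [|j]; first by rewrite !grown_nil.
rewrite (@grownS s j.+1) // prefix_prefix size_cat /=.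
by case: (nth None (fgraph s) j) => [?|] /=; rewrite ?addn1 ?addn0.
Qed.

Lemma grown_bit s j : j <= m ->
  (grown s j != grown s j.+1) && prefix (grown s j) (grown s j.+1) = nth false (grow_bits s) j.
Proof.
case: j => [|j] Hj; first by rewrite !grown_nil.
rewrite (@grownS s j.+1) //= nth_rcons size_map size_fgraph Hj (nth_map None) ?size_fgraph //.
case: (nth None (fgraph s) j) => [o|] /=; last by rewrite cats0 eqxx.
rewrite prefix_prefix andbT; apply/negP => /eqP/(f_equal size).
by rewrite size_cat /= addn1 => /n_Sn.
Qed.

Lemma grow_bits_last s : nth false (grow_bits s) m.+1 = false.
Proof. by rewrite /grow_bits /= nth_rcons size_map size_fgraph ltnn eqxx. Qed.

Lemma grow_bitsS s (k : 'I_m) : nth false (grow_bits s) k.+1 = isSome (s k).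
Proof.
rewrite /grow_bits /= nth_rcons size_map size_fgraph ltn_ord (nth_map None) ?size_fgraph //.
by rewrite nth_fgraph_ord.
Qed.

End Choices.

Section Lifting.
Context {d : Order.disp_t} (P : finPOrderType d) (t n m : nat).
Context {dL : Order.disp_t} {L : porderType dL} (lamP : hatT P -> hatT P -> L).
Hypothesis SP : semipure P.
Hypothesis Hn : forall x : P, (rankP x <= n)%N.
Variable x0 : P.

Notation HP := (hatT P).
Notation HR := (hatT (Rees P t n)).
Notation leP := (hat_le (<=%O : rel P)).
Notation leR := (hat_le (@rees_le _ P t n)).
Notation prj := (@proj_P _ P t n).
Notation prq := (@proj_T _ P t n).
Notation choices := {ffun 'I_m -> option 'I_t}.

Definition chainP (C : seq HP) := is_chain leP hbot htop C.
Definition chainR (D : seq HR) := is_chain leR hbot htop D.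

Lemma chainP_inner C : size C = (m + 2).+1 -> chainP C ->
  forall j, 0 < j < m + 2 -> exists2 x, nth hbot C j = inl x & rankP x = j.-1.
Proof.
move=> HC /(is_chain_nth _ _ _ HC) [H0 Hc Htop].
have Hinl j : 0 < j < m + 2 -> exists x, nth hbot C j = inl x.
  case: j => [//|j] /andP[_ Hj]; have := Hc _ Hj; have := Hc _ (ltnW Hj).
  case: (nth hbot C j.+1) => [x|[]]; first by exists x.
    by rewrite covr_hat_top.
  by rewrite covr_hat_bot.
elim=> [//|j IH] /andP[_ Hj]; have [x Hx] := Hinl j.+1 Hj; exists x => //.
case: j IH Hj Hx => [|j] IH Hj Hx.
  have := Hc 0 (ltn_trans (ltnSn 0) Hj); rewrite H0 Hx covr_hat_bot_inl.
  move=> mx; apply: (rank_min SP); rewrite minimalPE.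
  by apply/forallP => y; rewrite -ltrE (forallP mx y).
have [y Hy ry] := IH (ltnW Hj).
by have := Hc j.+1 (ltnW Hj); rewrite Hx Hy covr_hat_inl => /(rank_cov SP); rewrite ry.
Qed.

Lemma nth_map_prj (D : seq HR) j : nth hbot (map prj D) j = prj (nth hbot D j).
Proof. by elim: D j => [|a D IH] [|j] //=. Qed.

Lemma chainR_proj (D : seq HR) : size D = (m + 2).+1 -> chainR D -> chainP (map prj D).
Proof.
move=> HD /(is_chain_nth _ _ _ HD) [H0 Hc Htop].
apply/(is_chain_nth _ _ _ (etrans (size_map _ _) HD)); split.
- by rewrite nth_map_prj H0.
- move=> j Hj; rewrite !nth_map_prj; have := Hc j Hj.
  case: (eqVneq (nth hbot D j.+1) htop) => [->|Hv].
    by rewrite (covr_hatR_top SP Hn x0).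
  by rewrite (covr_hatR SP Hn) // => /andP[].
- by rewrite nth_map_prj Htop.
Qed.

(* lift C s places the word grown s j above entry j of C; conversely growth D
   reads off the letters added at the inner steps of D. *)
Definition liftR (c : HP) (q : seq 'I_t) : HR :=
  match c with inl x => inl (@mkR _ P t n x q) | inr b => inr b end.

Definition lift (C : seq HP) (s : choices) : (m + 2).+1.-tuple HR :=
  [tuple liftR (nth hbot C i) (grown s i) | i < (m + 2).+1].

Definition growth (D : seq HR) : choices :=
  [ffun i : 'I_m => ohead (drop (size (prq (nth hbot D i.+1))) (prq (nth hbot D i.+2)))].

Lemma prj_liftR c q : prj (liftR c q) = c.
Proof. by case: c => [x|b] //=; rewrite -/(rp _) mkR_p. Qed.

Lemma prq_liftR x q : size q <= rankP x -> prq (liftR (inl x) q) = q.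
Proof. by move=> H; rewrite /= -/(rq _) mkR_q. Qed.

Lemma nth_lift C s j : j < (m + 2).+1 -> nth hbot (lift C s) j = liftR (nth hbot C j) (grown s j).
Proof. by move=> Hj; rewrite (nth_mktuple _ _ (Ordinal Hj)). Qed.

Lemma prj_lift C s : size C = (m + 2).+1 -> map prj (lift C s) = C.
Proof.
move=> HC; apply: (@eq_from_nth _ hbot); first by rewrite size_map size_tuple.
move=> j; rewrite size_map size_tuple => Hj.
by rewrite (nth_map hbot) ?size_tuple // nth_lift // prj_liftR.
Qed.

Lemma prq_lift C s j : size C = (m + 2).+1 -> chainP C -> j < m + 2 ->
  prq (nth hbot (lift C s) j) = grown s j.
Proof.
move=> HC Hch Hj; rewrite nth_lift; last exact: ltnW.
case: j Hj => [|j] Hj.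
  by move/(is_chain_nth _ _ _ HC): Hch => [-> _ _]; rewrite grown_nil.
have [x Hx rx] := chainP_inner HC Hch (j:=j.+1) Hj.
by rewrite Hx prq_liftR // rx size_grown.
Qed.

Lemma chain_lift C s : size C = (m + 2).+1 -> chainP C -> chainR (lift C s).
Proof.
move=> HC Hch; have := Hch; move/(is_chain_nth _ _ _ HC) => [H0 Hc Htop].
apply/(is_chain_nth _ _ _ (size_tuple _)); split.
- by rewrite nth_lift // H0.
- move=> j Hj; case: (ltnP j.+1 (m + 2)) => Hj1.
    have [x Hx _] := chainP_inner HC Hch (j:=j.+1) Hj1.
    have NT : nth hbot (lift C s) j.+1 != htop by rewrite nth_lift // Hx.
    rewrite (covr_hatR SP Hn) // -!nth_map_prj prj_lift // !prq_lift // (Hc j Hj).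
    exact: grown_step.
  have E : j.+1 = m + 2 by apply/eqP; rewrite eqn_leq Hj1 Hj.
  rewrite E (@nth_lift _ _ (m + 2)) // Htop /= (covr_hatR_top SP Hn x0).
  by rewrite -nth_map_prj prj_lift // -Htop -E; exact: Hc.
- by rewrite nth_lift // Htop.
Qed.

Lemma growth_lift C s : size C = (m + 2).+1 -> chainP C -> growth (lift C s) = s.
Proof.
move=> HC Hch; apply/ffunP => i; rewrite ffunE.
have i1 : i.+1 < m + 2 by have := ltn_ord i; lia.
have i2 : i.+2 < m + 2 by have := ltn_ord i; lia.
rewrite !prq_lift // (grownS s (j:=i.+1)) // drop_size_cat //= nth_fgraph_ord.
by case: (s i).
Qed.

Lemma chainR_inner (D : seq HR) : size D = (m + 2).+1 -> chainR D ->
  forall j, 0 < j < m + 2 -> exists2 a, nth hbot D j = inl a & rankP (rp a) = j.-1.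
Proof.
move=> HD Hch j Hj.
have HC : size (map prj D) = (m + 2).+1 by rewrite size_map.
have [x Hx rx] := chainP_inner HC (chainR_proj HD Hch) Hj.
move: Hx; rewrite nth_map_prj; case: (nth hbot D j) => [a|b] //= [Ea].
by exists a; rewrite // /rp Ea.
Qed.

Lemma prq_growth (D : seq HR) : size D = (m + 2).+1 -> chainR D ->
  forall j, 0 < j < m + 2 -> prq (nth hbot D j) = grown (growth D) j.
Proof.
move=> HD Hch; have := Hch; move/(is_chain_nth _ _ _ HD) => [_ Hc _].
elim=> [//|j IH] Hj; have [a Ea ra] := chainR_inner HD Hch Hj.
case: j IH Hj Ea ra => [|j] IH Hj Ea ra.
  rewrite grown_nil // Ea /=; apply/eqP; rewrite -size_eq0 -leqn0.
  by have := rq_rank a; rewrite ra.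
have jm : j < m by case/andP: Hj => _; lia.
have := Hc j.+1 (ltnW (proj2 (andP Hj))); rewrite (covr_hatR SP Hn); last by rewrite Ea.
case/and3P => _ pre sz; rewrite (grownS _ (j:=j.+1)) // -IH; last by case/andP: Hj => _ /ltnW.
have -> : j.+1.-1 = nat_of_ord (Ordinal jm) by [].
rewrite nth_fgraph_ord ffunE ohead_pmap; last by rewrite size_drop leq_subLR addn1.
set q := prq (nth hbot D j.+1); set q' := prq (nth hbot D j.+2).
by rewrite -{1}(cat_take_drop (size q) q') (eqP (etrans (esym (prefixE _ _)) pre)).
Qed.

Lemma lift_growth (D : (m + 2).+1.-tuple HR) : chainR D -> lift (map prj D) (growth D) = D.
Proof.
move=> Hch; have HD := size_tuple D.
have := Hch; move/(is_chain_nth _ _ _ HD) => [H0 _ Htop].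
apply: val_inj; apply: (@eq_from_nth _ hbot); first by rewrite !size_tuple.
move=> j; rewrite size_tuple => Hj; rewrite nth_lift // nth_map_prj.
case: j Hj => [|j] Hj; first by rewrite H0.
case: (ltnP j.+1 (m + 2)) => Hj1.
  have [a Ea _] := chainR_inner HD Hch (j:=j.+1) Hj1.
  by rewrite -prq_growth // Ea /= -/(rp a) -/(rq a) mkR_val.
have E : j.+1 = m + 2 by apply/eqP; rewrite eqn_leq Hj1 -ltnS Hj.
by rewrite E Htop.
Qed.

Lemma induced_lab_liftR u x q : size q <= rankP x ->
  @induced_lab _ P t n _ _ lamP u (liftR (inl x) q) =
  (lamP (prj u) (inl x), (prq u != q) && prefix (prq u) q).
Proof. by move=> H; rewrite /induced_lab /= -/(rp _) -/(rq _) mkR_p mkR_q. Qed.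

Lemma induced_lab_top u : @induced_lab _ P t n _ _ lamP u htop = (lamP (prj u) htop, false).
Proof. by []. Qed.

Lemma labels_lift C s : size C = (m + 2).+1 -> chainP C ->
  labels (@induced_lab _ P t n _ _ lamP) (lift C s) = zip (labels lamP C) (grow_bits s).
Proof.
move=> HC Hch; have := Hch; move/(is_chain_nth _ _ _ HC) => [_ _ Htop].
have SL : size (labels lamP C) = m + 2 by rewrite size_labels HC.
have SB : size (grow_bits s) = m + 2 by rewrite /= size_rcons size_map size_fgraph addn2.
apply: (@eq_from_nth _ (lamP hbot hbot, false)).
  by rewrite size_labels size_tuple size_zip SL SB minnn.
move=> j; rewrite size_labels size_tuple => Hj.
rewrite nth_zip ?SL // !(nth_labels _ _ hbot) ?size_tuple ?HC //.
case: (ltnP j.+1 (m + 2)) => Hj1.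
  have [x Hx rx] := chainP_inner HC Hch (j:=j.+1) Hj1.
  rewrite [nth _ (lift _ _) j.+1]nth_lift // Hx induced_lab_liftR; last by rewrite rx size_grown.
  rewrite -nth_map_prj prj_lift // prq_lift // -Hx grown_bit //; lia.
have E : j.+1 = m + 2 by lia.
rewrite E (nth_lift _ _ (j:=m + 2)) // Htop induced_lab_top -nth_map_prj prj_lift //.
have -> : j = m.+1 by lia.
by rewrite grow_bits_last.
Qed.

End Lifting.

Section Ascents.
Variables (A : Type) (r : A -> A -> bool).

Lemma size_ascs s : size (ascs r s) = (size s).-1.
Proof. by rewrite /ascs size_map size_zip size_behead; case: s => //= _ s; lia. Qed.

Lemma nth_ascs (x0 : A) s i : i < (size s).-1 ->
  nth false (ascs r s) i = r (nth x0 s i) (nth x0 s i.+1).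
Proof.
move=> Hi; have Hz : i < size (zip s (behead s)).
  by rewrite size_zip size_behead; case: s Hi => //= _ s; lia.
by rewrite /ascs (nth_map (x0, x0)) // nth_zip_cond Hz /= nth_behead.
Qed.

End Ascents.

Lemma count_id_sum (s : seq bool) : count id s = \sum_(i < size s) nth false s i.
Proof. by elim: s => [|b s IH]; rewrite ?big_ord0 // big_ord_recl /= IH. Qed.

Section AscentFreeLifts.
Context {dL : Order.disp_t} {L : porderType dL} (t m : nat) (w : seq L).
Hypothesis Hw : size w = m + 2.
Notation choices := {ffun 'I_m -> option 'I_t}.
Notation bit s i := (nth false (grow_bits s) i).

Definition asc_at i := nth false (ascs <=%O w) i.

Lemma ascent_free_zip (s : choices) :
  ascent_free prod_le (zip w (grow_bits s)) =
  [forall i : 'I_m.+1, asc_at i ==> bit s i && ~~ bit s i.+1].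
Proof.
have x0 : L by case: w Hw => [|x ?] //; rewrite addn2.
have SB : size (grow_bits s) = m + 2 by rewrite /= size_rcons size_map size_fgraph addn2.
have SZ : size (zip w (grow_bits s)) = m + 2 by rewrite size_zip Hw SB minnn.
have key i : i < m.+1 -> ~~ nth false (ascs prod_le (zip w (grow_bits s))) i =
                         (asc_at i ==> bit s i && ~~ bit s i.+1).
  move=> Hi; rewrite (nth_ascs _ (x0, false)); last by rewrite SZ addn2.
  rewrite !nth_zip ?Hw ?SB // /prod_le /= /asc_at (nth_ascs _ x0); last by rewrite Hw addn2.
  by case: (_ <= _)%O; case: (bit s i); case: (bit s i.+1).
rewrite /ascent_free -all_predC; apply/(all_nthP false)/forallP => H i.
  by rewrite -key //; apply: H; rewrite size_ascs SZ addn2.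
by rewrite size_ascs SZ addn2 /= => Hi; rewrite key // (H (Ordinal Hi)).
Qed.

Definition allowed (k : 'I_m) : pred (option 'I_t) :=
  [pred o | (asc_at k.+1 ==> isSome o) && (asc_at k ==> ~~ isSome o)].

Lemma ascent_free_family (s : choices) :
  ascent_free prod_le (zip w (grow_bits s)) = ~~ asc_at 0 && (s \in family allowed).
Proof.
rewrite ascent_free_zip; apply/forallP/andP => [H|[a0 /familyP F] [i Hi]].
  have H' i (Hi : i < m.+1) := H (Ordinal Hi).
  split; first by have := H' 0 isT; rewrite implybF.
  apply/familyP => k; rewrite inE; apply/andP; split.
    by have := H' k.+1 (ltn_ord k); rewrite (grow_bitsS s k); case: asc_at; case: isSome.
  by have := H' k (leqW (ltn_ord k)); rewrite (grow_bitsS s k); case: asc_at => //= /andP[].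
case: i Hi => [|j] Hj; first by rewrite /= (negbTE a0).
have jm : j < m by [].
change (asc_at j.+1 ==> bit s j.+1 && ~~ bit s j.+2).
have /andP[F1 _] := F (Ordinal jm); rewrite (grow_bitsS s (Ordinal jm)).
case: (ltnP j.+1 m) => Hj1.
  have /andP[_ F2] := F (Ordinal Hj1); rewrite (grow_bitsS s (Ordinal Hj1)).
  by move: F1 F2 => /=; case: asc_at; case: isSome; case: isSome.
have -> : j.+1 = m by apply/eqP; rewrite eqn_leq Hj1 jm.
by rewrite grow_bits_last andbT; move: F1; rewrite (_ : j.+1 = m) //; lia.
Qed.

Lemma card_allowed k : #|allowed k| =
  if asc_at k.+1 && asc_at k then 0 else if asc_at k.+1 then t else if asc_at k then 1 else t.+1.
Proof.
have card_some : #|[pred o : option 'I_t | isSome o]| = t.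
  by rewrite (eq_card (B := predC1 None)) ?cardC1 ?card_option ?card_ord //; case.
rewrite /allowed; case: (asc_at k.+1); case: (asc_at k) => /=.
- by apply: eq_card0 => o; rewrite inE; case: o.
- by rewrite -[RHS]card_some; apply: eq_card => o; rewrite !inE andbT.
- by rewrite (eq_card (B := pred1 None)) ?card1 //; case.
- by rewrite (eq_card (B := predT)) ?card_option ?card_ord //; case.
Qed.

Lemma NDA_asc_at : NDA <=%O (m + 2) w = [forall k : 'I_m, ~~ (asc_at k && asc_at k.+1)].
Proof.
have SA : size (ascs <=%O w) = m.+1 by rewrite size_ascs Hw addn2.
have SZ : size (zip (ascs <=%O w) (behead (ascs <=%O w))) = m.
  by rewrite size_zip size_behead SA; lia.
rewrite /NDA Hw eqxx /= -all_predC; apply/(all_nthP (false, false))/forallP => H k.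
  by have := H k; rewrite SZ ltn_ord nth_zip_cond SZ ltn_ord /= nth_behead => /(_ isT).
by rewrite SZ => Hk; rewrite nth_zip_cond SZ Hk /= nth_behead (H (Ordinal Hk)).
Qed.

Lemma asc_sum : asc <=%O w = \sum_(i < m.+1) asc_at i.
Proof. by rewrite /asc count_id_sum size_ascs Hw addn2. Qed.

Definition lift_count : nat :=
  if NDA <=%O (m + 2) w && ~~ asc_at 0
  then t ^ asc <=%O w * (1 + t) ^ (m + asc_at m - 2 * asc <=%O w) else 0.

Lemma card_ascent_free_lifts :
  #|[pred s : choices | ascent_free prod_le (zip w (grow_bits s))]| = lift_count.
Proof.
rewrite (eq_card (B := [pred s | ~~ asc_at 0 && (s \in family allowed)])); last first.
  by move=> s; rewrite !inE ascent_free_family.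
rewrite /lift_count NDA_asc_at; case: (boolP (asc_at 0)) => a0 /=.
  by rewrite andbF; apply: eq_card0 => s; rewrite !inE.
rewrite (eq_card (B := family allowed)) ?card_family; last by move=> s; rewrite !inE.
rewrite andbT foldrE big_map big_enum (eq_bigl xpredT) //=.
case: (boolP [forall k : 'I_m, ~~ (asc_at k && asc_at k.+1)]) => H; last first.
  move: H => /forallPn [k]; rewrite negbK => Hk.
  by rewrite (bigD1 k) //= card_allowed andbC Hk.
(* with no double ascent, step k offers t or 1 choices next to an ascent
   and t + 1 choices otherwise *)
have E k : #|allowed k| = t ^ asc_at k.+1 * (1 + t) ^ (1 - (asc_at k + asc_at k.+1)).
  rewrite card_allowed; have := forallP H k.
  by case: (asc_at k.+1); case: (asc_at k) => //=; rewrite ?expn1 ?muln1 ?mul1n ?add1n.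
rewrite (eq_bigr _ (fun k _ => E k)) big_split /= -!expn_sum.
have S1 : \sum_(k < m) asc_at k.+1 = asc <=%O w.
  by rewrite asc_sum big_ord_recl (negbTE a0).
have S2 : \sum_(k < m) asc_at k + asc_at m = asc <=%O w by rewrite asc_sum big_ord_recr.
have S3 : \sum_(k < m) (1 - (asc_at k + asc_at k.+1)) + \sum_(k < m) asc_at k
          + \sum_(k < m) asc_at k.+1 = m.
  rewrite -!big_split /= (eq_bigr (fun _ => 1)) ?sum1_card ?card_ord // => k _.
  by have := forallP H k; case: (asc_at k.+1); case: (asc_at k).
rewrite S1; congr (_ * _ ^ _); move: S2 S3; rewrite S1.
(* abstract the sums so that the exponent identity is linear arithmetic *)
move: (\sum_(k < m) _) (\sum_(k < m) nat_of_bool _) (asc _ _) (nat_of_bool _).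
by move=> free B a e; lia.
Qed.

End AscentFreeLifts.

Section LabelWords.
Variables (X : finType) (le : rel X) (bot top : X) (A : eqType) (lam : X -> X -> A) (k : nat).

Lemma sum_label_words (F : seq A -> nat) :
  let c := fun w => nchains le bot top lam k (fun w' => w' == w) in
  let W := undup [seq labels lam (tval ch) |
                  ch <- enum [pred ch : k.+1.-tuple X | is_chain le bot top ch]] in
  \sum_(w <- W) c w * F w = \sum_(C : k.+1.-tuple X | is_chain le bot top C) F (labels lam C).
Proof.
move=> c W; under eq_bigr => w _ do rewrite /c /nchains -sum_nat_const big_mkcond /=.
rewrite exchange_big [RHS]big_mkcond /=; apply: eq_bigr => C _.
under eq_bigr => w _ do rewrite inE.
case: (boolP (is_chain le bot top C)) => HC /=; last by rewrite big1.
have WC : labels lam C \in W.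
  by rewrite mem_undup; apply/mapP; exists C; rewrite ?mem_enum.
rewrite (bigD1_seq _ WC (undup_uniq _)) /= eqxx big1_seq ?addn0 // => w /andP[nw _].
by rewrite eq_sym (negbTE nw).
Qed.

End LabelWords.

Section Counting.
Context {d : Order.disp_t} (P : finPOrderType d) (t n m : nat).
Context {dL : Order.disp_t} {L : porderType dL} (lamP : hatT P -> hatT P -> L).
Hypothesis SP : semipure P.
Hypothesis Hn : forall x : P, (rankP x <= n)%N.
Variable x0 : P.

Notation HP := (hatT P).
Notation leR := (hat_le (@rees_le _ P t n)).
Notation prj := (@proj_P _ P t n).
Notation choices := {ffun 'I_m -> option 'I_t}.

Lemma card_lifted_chains (Q : pred (seq (L * bool))) :
  nchains leR hbot htop (@induced_lab _ P t n _ _ lamP) (m + 2) Q =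
  #|[pred p : (m + 2).+1.-tuple HP * choices |
     chainP p.1 && Q (zip (labels lamP p.1) (grow_bits p.2))]|.
Proof.
set S := [pred p | _].
pose f (p : (m + 2).+1.-tuple HP * choices) := lift n (tval p.1) p.2.
have f_inj : {in S &, injective f}.
  move=> [C1 s1] [C2 s2]; rewrite !inE /f /= => /andP[H1 _] /andP[H2 _] E.
  have EC : C1 = C2.
    by apply: val_inj; rewrite /= -(prj_lift n s1 (size_tuple C1)) E prj_lift ?size_tuple.
  subst C2; congr pair.
  by rewrite -(growth_lift SP Hn s1 (size_tuple C1) H1) E growth_lift ?size_tuple.
rewrite /nchains -(card_in_imset f_inj); apply: eq_card => D; rewrite inE.
apply/andP/imsetP => [[HD QD]|[[C s]]]; last first.
  rewrite inE /= => /andP[HC QC] ->; have SC := size_tuple C; split.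
    exact: (chain_lift SP Hn x0 s SC HC).
  by rewrite /f /= (labels_lift lamP SP Hn s SC HC).
have HC := chainR_proj SP Hn x0 (size_tuple D) HD.
have SC : size (map prj D) = (m + 2).+1 by rewrite size_map size_tuple.
exists (map_tuple prj D, growth m D); last by rewrite /f /= (lift_growth SP Hn x0 HD).
rewrite inE; apply/andP; split; first exact: HC.
change (Q (zip (labels lamP (map prj D)) (grow_bits (growth m D)))).
by rewrite -(labels_lift lamP SP Hn _ SC HC) (lift_growth SP Hn x0 HD).
Qed.

Lemma nchains_lift (Q : pred (seq (L * bool))) :
  nchains leR hbot htop (@induced_lab _ P t n _ _ lamP) (m + 2) Q =
  \sum_(C : (m + 2).+1.-tuple HP | chainP C)
     #|[pred s : choices | Q (zip (labels lamP C) (grow_bits s))]|.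
Proof.
rewrite card_lifted_chains -sum1_card; under [RHS]eq_bigr do rewrite -sum1_card.
by rewrite pair_big_dep /=; apply: eq_bigl => -[C s].
Qed.

End Counting.

Lemma sum_lift_count {dL : Order.disp_t} {L : porderType dL} (t m : nat)
  (W : seq (seq L)) (c : seq L -> nat) :
  \sum_(w <- W | [&& NDA <=%O (m + 2) w, ~~ nth false (ascs <=%O w) 0
                   & ~~ nth false (ascs <=%O w) m])
     c w * t ^ asc <=%O w * (1 + t) ^ (m - 2 * asc <=%O w)
  + \sum_(w <- W | [&& NDA <=%O (m + 2) w, ~~ nth false (ascs <=%O w) 0
                     & nth false (ascs <=%O w) m])
     c w * t ^ asc <=%O w * (1 + t) ^ (m + 1 - 2 * asc <=%O w)
  = \sum_(w <- W) c w * lift_count t m w.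
Proof.
rewrite big_mkcond [X in _ + X]big_mkcond -big_split /=; apply: eq_bigr => w _.
rewrite /lift_count /asc_at; case: (NDA _ _ _); case: (nth false _ 0); case: (nth false _ m);
  by rewrite /= ?addn0 ?add0n ?muln0 ?mulnA ?addn1.
Qed.

Local Open Scope order_scope.

Theorem theorem3p4 (d : Order.disp_t) (P : finPOrderType d) (n t : nat)
  (dL : Order.disp_t) (L : porderType dL) (lamP : hatT P -> hatT P -> L) (m : nat) :
  semipure P -> poset_length P n -> (1 <= t)%N ->
  EL_labeling (hat_le (<=%O : rel P)) lamP ->
  let c := fun w : seq L =>
    nchains (hat_le (<=%O : rel P)) hbot htop lamP (m + 2) (fun w' => w' == w) in
  let W := undup [seq labels lamP (tval ch) |
                  ch <- enum [pred ch : (m + 2).+1.-tuple (hatT P) |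
                              is_chain (hat_le (<=%O : rel P)) hbot htop ch]] in
  nchains (hat_le (@rees_le _ P t n)) hbot htop (@induced_lab _ P t n _ _ lamP) (m + 2)
          (ascent_free prod_le)
  = (\sum_(w <- W | [&& NDA <=%O (m + 2) w, ~~ nth false (ascs <=%O w) 0
                        & ~~ nth false (ascs <=%O w) m])
        c w * t ^ asc <=%O w * (1 + t) ^ (m - 2 * asc <=%O w)
   + \sum_(w <- W | [&& NDA <=%O (m + 2) w, ~~ nth false (ascs <=%O w) 0
                        & nth false (ascs <=%O w) m])
        c w * t ^ asc <=%O w * (1 + t) ^ (m + 1 - 2 * asc <=%O w))%N.
Proof.
move=> SP [[x0 _] Hn] _ _ c W.
rewrite sum_lift_count sum_label_words (nchains_lift t m lamP SP Hn x0).
apply: eq_bigr => C _; apply: card_ascent_free_lifts.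
by rewrite size_labels size_tuple.
Qed.
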